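(* Let $n\ge 1$ and let $\sigma_{ABB'}$ be an arbitrary quantum state where $A$ consists of $2n$ qubits and $B,B'$ are arbitrary finite-dimensional systems. Let $\Phi_B$ be an arbitrary quantum operation acting on $B$ only that outputs a classical string $T\in\{0,1\}^{2n}$, and let $\Phi_{B'}$ be an arbitrary quantum operation acting on $B'$ only that outputs a classical string $T'\in\{0,1\}^{2n}$. Let $\mathcal{Z}\subset[2n]$ be a uniformly random subset of size $n$, chosen independently of everything else, and $\mathcal{X}=[2n]\setminus\mathcal{Z}$. The qubits of $A$ indexed by $\mathcal{Z}$ are measured in the computational basis $\{\ket0,\ket1\}$, giving $S_{\mathcal{Z}}\in\{0,1\}^n$, and those indexed by $\mathcal{X}$ are measured in the Hadamard basis $\{\ket+,\ket-\}$, giving $S_{\mathcal{X}}\in\{0,1\}^n$. Write $T_{\mathcal{Z}}$ for the restriction of $T$ to $\mathcal{Z}$ and $T'_{\mathcal{X}}$ for the restriction of $T'$ to $\mathcal{X}$. Let $$\alpha := \Pr\left[T_{\mathcal{Z}} = S_{\mathcal{Z}} \ \wedge\ T'_{\mathcal{X}} = S_{\mathcal{X}}\right].$$ Then $$\alpha \le \inf_{\delta\in(0,\frac12)}\left( 2^{1-n(1-h(\delta))} + 2\exp\!\left(-\tfrac12 n\delta^2\right)\right),$$ where $h(q)=-q\log q-(1-q)\log(1-q)$ is the binary entropy (logarithm base 2).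
   Context: Interpretation: $\alpha$ is the probability that, in a bit commitment protocol where Alice holds halves of EPR pairs, a dishonest agent Bob successfully opens $0$ (matching Alice's computational-basis outcomes) while a non-communicating agent Brian successfully opens $1$ (matching Alice's Hadamard-basis outcomes). *)

From HB Require Import structures.
From mathcomp Require Import all_boot all_order all_algebra.
From mathcomp Require Import complex.
From mathcomp Require Import reals.
From mathcomp.analysis Require Import sequences exp.

Set Implicit Arguments.
Unset Strict Implicit.
Unset Printing Implicit Defensive.

Import Order.TTheory GRing.Theory Num.Theory.
Local Open Scope ring_scope.

(** Operators on the finite-dimensional Hilbert space C^K, with K a finite
    type indexing an orthonormal basis, are represented by their matrix
    entries [X x y] (x = row, y = column). *)
Definition op (R : realType) (K : finType) := K -> K -> R[i].

(** Positive semidefinite: <v, X v> >= 0 for every vector v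
    (in the order of C, this also says the quadratic form is real). *)
Definition psd (R : realType) (K : finType) (X : op R K) : Prop :=
  forall v : K -> R[i],
    0 <= \sum_(x : K) \sum_(y : K) (v x)^* * X x y * v y.

Definition density (R : realType) (K : finType) (rho : op R K) : Prop :=
  psd rho /\ \sum_(x : K) rho x x = 1.

Definition povm (R : realType) (K O : finType) (M : O -> op R K) : Prop :=
  (forall o, psd (M o)) /\
  (forall x y : K, \sum_(o : O) M o x y = (x == y)%:R).

(** Bit strings of length m: basis labels of m qubits / classical strings. *)
Definition bits (m : nat) := {ffun 'I_m -> bool}.

(** Single-qubit rank-one projector onto the outcome-[s] vector of the
    computational basis ([hadamard = false]: |0>,|1>) or of the Hadamard
    basis ([hadamard = true]: |+> for s = false, |-> for s = true). *)
Definition qubit_proj (R : realType) (hadamard s : bool) (a b : bool) : R[i] :=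
  if hadamard then
    (1 / 2) * (-1) ^+ (s && a) * (-1) ^+ (s && b)
  else ((a == s) && (b == s))%:R.

(** The projector on the 2n qubits of A when the qubits in Z are measured in
    the computational basis, the others in the Hadamard basis, and the
    (combined) outcome string is s. *)
Definition meas_proj (R : realType) (m : nat) (Z : {set 'I_m}) (s : bits m)
  : op R (bits m) :=
  fun a b => \prod_(i < m) qubit_proj R (i \notin Z) (s i) (a i) (b i).

Definition tens3 (R : realType) (KA KB KB' : finType)
  (X : op R KA) (Y : op R KB) (W : op R KB') : op R (KA * KB * KB')%type :=
  fun x y => X x.1.1 y.1.1 * Y x.1.2 y.1.2 * W x.2 y.2.

Definition trace_mul (R : realType) (K : finType) (rho X : op R K) : R[i] :=
  \sum_(x : K) \sum_(y : K) rho x y * X y x.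

(** The success probability alpha: Z uniform among the n-subsets of [2n]
    (X its complement), the qubits of A measured as described giving S,
    Bob's measurement M on B giving T, Brian's measurement N on B' giving T',
    and the event  T_Z = S_Z  /\  T'_X = S_X. *)
Definition alpha (R : realType) (n : nat) (B B' : finType)
  (sigma : op R (bits (2 * n) * B * B')%type)
  (M : bits (2 * n) -> op R B) (N : bits (2 * n) -> op R B') : R :=
  (('C(2 * n, n))%:R)^-1 *
  \sum_(Z : {set 'I_(2 * n)} | #|Z| == n)
    \sum_(s : bits (2 * n)) \sum_(t : bits (2 * n)) \sum_(t' : bits (2 * n))
      if [forall i, (i \in Z) ==> (t i == s i)] &&
         [forall i, (i \notin Z) ==> (t' i == s i)]
      then complex.Re (trace_mul sigma (tens3 (meas_proj R Z s) (M t) (N t')))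
      else 0.

Definition log2 (R : realType) (x : R) : R := ln x / ln 2.
Definition h2 (R : realType) (q : R) : R :=
  - q * log2 q - (1 - q) * log2 (1 - q).

From HB Require Import structures.
From mathcomp Require Import all_boot all_order all_algebra.
From mathcomp Require Import complex.
From mathcomp Require Import reals.
From mathcomp.analysis Require Import sequences exp.
From mathcomp Require Import spectral sesquilinear.
From mathcomp Require Import ring lra zify.
Import Order.TTheory GRing.Theory Num.Theory.
Local Open Scope ring_scope.

(** For fixed guesses [t], [t'], the event is that Alice's outcome is the splice
    of [t] on [Z] and [t'] off [Z], so [C(2n,n) alpha] is the sum over [t, t'] of
    [Tr (sigma (sum_Z P_Z (x) M_t (x) N_t'))] for the selected projectors [P_Z].
    Each [P_Z] is [2^-n] times a rank-one projector onto a vector of [0]/[+-1]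
    amplitudes whose pairwise overlaps factor over the qubits; the Schur test
    bounds [sum_Z P_Z <= (35/12)^n I] whatever outcomes are selected, and
    completeness of Bob's and Brian's measurements gives
    [alpha <= (35/12)^n / C(2n,n) <= 2 (7/8)^n <= 2 exp (-n delta^2 / 2)]. *)

Set Implicit Arguments.
Unset Strict Implicit.

Lemma sum_delta_mul (S : pzSemiRingType) (K : finType) (f : K -> S) x :
  \sum_y (y == x)%:R * f y = f x.
Proof. by rewrite (bigD1 x) //= eqxx mul1r big1 ?addr0 // => y /negbTE ->; rewrite mul0r. Qed.

Section BinomialEstimates.
Variable R : realType.

Lemma mul_succ_bin_double (n : nat) :
  (n.+1 * 'C(n.+1.*2, n.+1) = 2 * n.*2.+1 * 'C(n.*2, n))%N.
Proof.
have e1 : 'C(n.+1.*2, n.+1) = ('C(n.*2.+1, n.+1) + 'C(n.*2.+1, n))%N.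
  by rewrite doubleS binS.
have e2 : 'C(n.*2.+1, n) = 'C(n.*2.+1, n.+1).
  by rewrite -(@bin_sub n.*2.+1 n.+1); [congr 'C(_, _) | ]; lia.
have e3 := mul_bin_diag n.*2.+1 n.
rewrite e1 e2 mulnDr -e3 /=; lia.
Qed.

Lemma sqr_bin_double_ge (n : nat) : (1 <= n)%N ->
  5 * 16 ^+ n <= (16 * n%:R + 4) * ('C(n.*2, n)%:R : R) ^+ 2.
Proof.
elim: n => // -[_ _|m IH _].
  by rewrite (_ : 'C(1.*2, 1)%:R = 2 :> R) // expr1; lra.
have {}IH := IH isT.
have hrec : m.+2%:R * ('C(m.+2.*2, m.+2)%:R : R) =
    2 * (2 * m.+1%:R + 1) * 'C(m.+1.*2, m.+1)%:R.
  rewrite -natrM mul_succ_bin_double !natrM -[(m.+1).*2.+1]addn1 -mul2n.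
  by rewrite natrD natrM.
move: IH hrec; rewrite [16 ^+ m.+2]exprS -[m.+2%:R]natr1.
set x := m.+1%:R; set y := 'C(_, _)%:R; set z := 'C(_, _)%:R; set P := 16 ^+ m.+1.
move=> IH hrec.
have hx : 0 <= x by rewrite ler0n.
have hxz : (x + 1) ^+ 2 * ((16 * (x + 1) + 4) * z ^+ 2) =
    (16 * x + 20) * (4 * (2 * x + 1) ^+ 2 * y ^+ 2).
  transitivity ((16 * (x + 1) + 4) * ((x + 1) * z) ^+ 2); first by ring.
  by rewrite hrec; ring.
have : (x + 1) ^+ 2 * (16 * (5 * P)) <= (x + 1) ^+ 2 * ((16 * (x + 1) + 4) * z ^+ 2).
  by rewrite hxz; have := sqr_ge0 y; nra.
rewrite ler_pM2l; [lra | nra].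
Qed.

Lemma linear_le_geometric (n : nat) : 4 * n%:R + 1 <= 5 * (36 / 25 : R) ^+ n.
Proof.
do 3 (case: n => [|n]; first by rewrite ?expr0 ?expr1 ?expr2; lra).
elim: n => [|n IH]; first by rewrite !exprS expr0; lra.
rewrite exprS -[n.+4%:R]natr1; move: IH.
set y := n.+3%:R; set Q := _ ^+ n.+3 => IH.
have hy : 3 <= y by rewrite ler_nat.
have : 36 / 25 * (4 * y + 1) <= 36 / 25 * (5 * Q) by rewrite ler_wpM2l //; lra.
lra.
Qed.

(** Squared, this reads [(1225/144)^n <= 4 (49/64)^n C^2]; it follows from
    [sqr_bin_double_ge] and [linear_le_geometric] as [36/25 * 1225/144 = 49/64 * 16]. *)
Lemma geometric_le_bin_double (n : nat) : (1 <= n)%N ->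
  (35 / 12 : R) ^+ n <= 2 * (7 / 8) ^+ n * 'C(n.*2, n)%:R.
Proof.
move=> n_gt0; set c : R := 'C(n.*2, n)%:R.
have hc := sqr_bin_double_ge n_gt0; have hn := linear_le_geometric n.
have hn0 : 0 <= n%:R :> R by rewrite ler0n.
rewrite -(@ler_pXn2r _ 2) ?nnegrE ?mulr_ge0 ?exprn_ge0 ?ler0n //; try lra.
have sqrX (a : R) : (a ^+ n) ^+ 2 = (a ^+ 2) ^+ n by rewrite -!exprM mulnC.
rewrite [(2 * _ * _) ^+ 2]exprMn [(2 * _) ^+ 2]exprMn !sqrX.
rewrite (_ : (35 / 12 : R) ^+ 2 = 1225 / 144); last by rewrite expr2; lra.
rewrite (_ : (7 / 8 : R) ^+ 2 = 49 / 64); last by rewrite expr2; lra.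
have e1 : (36 / 25 : R) ^+ n * (1225 / 144) ^+ n = (49 / 64) ^+ n * 16 ^+ n.
  by rewrite -!exprMn; congr (_ ^+ _); lra.
have hA : 0 <= (1225 / 144 : R) ^+ n by rewrite exprn_ge0 //; lra.
have hD : 0 <= (49 / 64 : R) ^+ n by rewrite exprn_ge0 //; lra.
have : (16 * n%:R + 4) * (1225 / 144) ^+ n <=
    (16 * n%:R + 4) * (2 ^+ 2 * (49 / 64) ^+ n * c ^+ 2).
  apply: (@le_trans _ _ (20 * ((49 / 64) ^+ n * 16 ^+ n))).
    rewrite -e1; have := ler_wpM2r hA hn; lra.
  have := ler_wpM2l hD hc; rewrite expr2; lra.
by rewrite ler_pM2l //; lra.
Qed.

Lemma geometric_le_expR (n : nat) (delta : R) : delta ^+ 2 <= 1 / 4 ->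
  (7 / 8 : R) ^+ n <= expR (- (1 / 2) * n%:R * delta ^+ 2).
Proof.
move=> hdelta; apply: (@le_trans _ _ (expR (n%:R * - (1 / 8)))).
  rewrite expRM_natl; apply: lerXn2r; rewrite ?nnegrE ?expR_ge0 //; first lra.
  have := expR_ge1Dx (- (1 / 8) : R); lra.
rewrite ler_expR; have : 0 <= n%:R :> R by rewrite ler0n.
nra.
Qed.

Lemma geometric_div_bin_double_le (n : nat) (delta : R) : (1 <= n)%N -> 0 < delta < 1 / 2 ->
  'C(2 * n, n)%:R^-1 * (35 / 12 : R) ^+ n <=
  powR 2 (1 - n%:R * (1 - h2 delta)) + 2 * expR (- (1 / 2) * n%:R * delta ^+ 2).
Proof.
move=> n_gt0 /andP[delta_gt0 delta_lt].
have c_gt0 : 0 < 'C(n.*2, n)%:R :> R by rewrite ltr0n bin_gt0 -addnn leq_addl.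
have hexp : (7 / 8 : R) ^+ n <= expR (- (1 / 2) * n%:R * delta ^+ 2).
  by apply: geometric_le_expR; rewrite expr2; nra.
rewrite mul2n mulrC ler_pdivrMr //.
apply: le_trans (geometric_le_bin_double n_gt0) _.
have := powR_ge0 2 (1 - n%:R * (1 - h2 delta)).
have := ler_wpM2r (ltW c_gt0) hexp.
nra.
Qed.
End BinomialEstimates.

Section SchurTest.
Variable R : realFieldType.

Lemma sum_mul_le_sum_sqr_norm (I : finType) (P : pred I) (c : I -> R) (g : I -> I -> R) :
  (forall i j, g i j = g j i) ->
  \sum_(i | P i) \sum_(j | P j) c i * c j * g i j <=
  \sum_(i | P i) \sum_(j | P j) c i ^+ 2 * `|g i j|.
Proof.
move=> g_sym.
have -> : \sum_(i | P i) \sum_(j | P j) c i ^+ 2 * `|g i j| =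
    \sum_(i | P i) \sum_(j | P j) (c i ^+ 2 + c j ^+ 2) / 2 * `|g i j|.
  under [RHS]eq_bigr do (under eq_bigr do rewrite mulrDl mulrDl); rewrite /=.
  under [RHS]eq_bigr do rewrite big_split /=; rewrite big_split /=.
  rewrite [X in _ = _ + X]exchange_big /= -big_split /=; apply: eq_bigr => i _.
  rewrite -big_split /=; apply: eq_bigr => j _.
  by rewrite g_sym -mulrDl -splitr.
apply: ler_sum => i _; apply: ler_sum => j _.
apply: (le_trans (ler_norm _)); rewrite !normrM ler_wpM2r //.
rewrite -(real_normK (num_real (c i))) -(real_normK (num_real (c j))).
have := sqr_ge0 (`|c i| - `|c j|); lra.
Qed.

Lemma schur_test (I K : finType) (P : pred I) (F : I -> K -> R) (w mu : R) :
  0 < w -> 0 < mu ->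
  (forall i, P i -> w * \sum_(j | P j) `|\sum_a F i a * F j a| <= mu) ->
  forall x : K -> R,
  \sum_(i | P i) w * (\sum_a F i a * x a) ^+ 2 <= mu * \sum_a x a ^+ 2.
Proof.
move=> w_gt0 mu_gt0 row_le x.
pose c i := \sum_a F i a * x a; pose S := \sum_(i | P i) w * c i ^+ 2.
pose W a := \sum_(i | P i) w * c i * F i a.
have xW : \sum_a x a * W a = S.
  under eq_bigr do rewrite mulr_sumr; rewrite exchange_big /=.
  apply: eq_bigr => i _; rewrite expr2 mulrA {3}/c mulr_sumr.
  by apply: eq_bigr => a _; ring.
have WW : \sum_a W a ^+ 2 <= mu * S.
  pose G i j := \sum_a F i a * F j a.
  have -> : \sum_a W a ^+ 2 =
      \sum_(i | P i) \sum_(j | P j) (w * c i) * (w * c j) * G i j.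
    under eq_bigr do rewrite expr2 mulr_suml; rewrite exchange_big /=.
    apply: eq_bigr => i _; under eq_bigr do rewrite mulr_sumr.
    rewrite exchange_big /=; apply: eq_bigr => j _.
    by rewrite /G mulr_sumr; apply: eq_bigr => a _; ring.
  apply: le_trans (sum_mul_le_sum_sqr_norm P (fun i => w * c i) _) _.
    by move=> i j; apply: eq_bigr => a _; rewrite mulrC.
  rewrite /S mulr_sumr; apply: ler_sum => i Pi.
  have -> : (w * c i) ^+ 2 = (w * c i ^+ 2) * w by rewrite exprMn expr2 mulrAC.
  rewrite -mulr_sumr -mulrA mulrC ler_wpM2r ?row_le //.
  by rewrite mulr_ge0 ?sqr_ge0 ?ltW.
have : 0 <= \sum_a (W a - mu * x a) ^+ 2 by apply: sumr_ge0 => a _; exact: sqr_ge0.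
have -> : \sum_a (W a - mu * x a) ^+ 2 =
    \sum_a W a ^+ 2 - 2 * mu * \sum_a x a * W a + mu ^+ 2 * \sum_a x a ^+ 2.
  by rewrite !mulr_sumr -sumrB -big_split /=; apply: eq_bigr => a _; ring.
rewrite xW => h; rewrite -(ler_pM2l mu_gt0) -subr_ge0.
have -> : mu * (mu * \sum_a x a ^+ 2) - mu * S =
    (\sum_a W a ^+ 2 - 2 * mu * S + mu ^+ 2 * \sum_a x a ^+ 2) +
    (mu * S - \sum_a W a ^+ 2) by ring.
by rewrite addr_ge0 ?subr_ge0.
Qed.
End SchurTest.

Section PositiveSemidefinite.
Variable C : numClosedFieldType.
Local Open Scope sesquilinear_scope.

(** At [C = R[i]] this is the [psd] of the statement. *)
Definition psd_op (K : finType) (X : K -> K -> C) :=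
  forall v : K -> C, 0 <= \sum_x \sum_y (v x)^* * X x y * v y.

Lemma eq_psd_op (K : finType) (X Y : K -> K -> C) :
  (forall x y, X x y = Y x y) -> psd_op X -> psd_op Y.
Proof. by move=> XY psdX v; under eq_bigr do under eq_bigr do rewrite -XY. Qed.

Lemma sum_two_point_mul (K : finType) (g : K -> C) x y d :
  \sum_b ((b == x)%:R + d * (b == y)%:R) * g b = g x + d * g y.
Proof.
under eq_bigr do rewrite mulrDl -mulrA.
by rewrite big_split /= -mulr_sumr !sum_delta_mul.
Qed.

Lemma quad_form_two_point (K : finType) (X : K -> K -> C) x y c :
  let v a := (a == x)%:R + c * (a == y)%:R in
  \sum_a \sum_b (v a)^* * X a b * v b =
  X x x + c * X x y + c^* * X y x + c^* * c * X y y.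
Proof.
move=> v; under eq_bigr => a _ do rewrite (eq_bigr _ (fun b _ => mulrC _ (v b))).
under eq_bigr do rewrite sum_two_point_mul rmorphD rmorphM /= !rmorph_nat.
by rewrite big_split /= -mulr_sumr !sum_two_point_mul; ring.
Qed.

(** The quadratic form at [1_x + c 1_y] is real for [c = 1] and for [c = 'i]. *)
Lemma psd_op_hermitian (K : finType) (X : K -> K -> C) :
  psd_op X -> forall x y, X y x = (X x y)^*.
Proof.
move=> psdX x y.
have q_real c : X x x + c * X x y + c^* * X y x + c^* * c * X y y \is Num.real.
  by rewrite -quad_form_two_point; apply: ger0_real; exact: psdX.
have rx : X x x \is Num.real by have := q_real 0; rewrite rmorph0 !mul0r !addr0.
have ry : X y y \is Num.real.
  have := psdX (fun a => (a == y)%:R + 0 * (a == y)%:R).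
  by rewrite quad_form_two_point rmorph0 !mul0r !addr0 => /ger0_real.
have e1 := conj_Creal (q_real 1); have e2 := conj_Creal (q_real 'i).
rewrite rmorph1 !mul1r !rmorphD /= (conj_Creal rx) (conj_Creal ry) in e1.
rewrite conjCi !rmorphD !rmorphM /= !rmorphN /= !conjCi ?opprK in e2.
rewrite (conj_Creal rx) (conj_Creal ry) in e2.
move: e1 e2; set a := X x y; set b := X y x => /eqP e1 /eqP e2.
rewrite -subr_eq0 in e1; rewrite -subr_eq0 in e2.
have E1 : (a^* + b^*) - (a + b) = 0 by rewrite -(eqP e1); ring.
have /eqP : 'i * ((b^* - a^*) - (a - b)) = 0 by rewrite -(eqP e2); ring.
rewrite mulf_eq0 (negbTE (neq0Ci C)) /= => /eqP E2.
have two_neq0 : (2 : C) != 0 by rewrite pnatr_eq0.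
have /(mulfI two_neq0) : 2 * b^* = 2 * a.
  by apply/eqP; rewrite -subr_eq0 -[0](addr0 0) -{1}E1 -{1}E2; apply/eqP; ring.
by move=> <-; rewrite conjCK.
Qed.

Lemma quad_form_decomposition (K J : finType) (d : J -> C) (u : J -> K -> C)
    (v : K -> C) :
  \sum_x \sum_y (v x)^* * (\sum_j d j * u j x * (u j y)^*) * v y =
  \sum_j d j * (\sum_x (v x)^* * u j x) * (\sum_y (u j y)^* * v y).
Proof.
under eq_bigr => x _ do under eq_bigr => y _ do rewrite mulr_sumr mulr_suml.
under eq_bigr => x _ do rewrite exchange_big /=.
rewrite exchange_big /=; apply: eq_bigr => j _.
rewrite -mulrA mulr_suml mulr_sumr; apply: eq_bigr => x _.
by rewrite !mulr_sumr; apply: eq_bigr => y _; ring.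
Qed.

Lemma psd_op_decomposition (K J : finType) (X : K -> K -> C) (d : J -> C)
    (u : J -> K -> C) :
  (forall j, 0 <= d j) -> (forall x y, X x y = \sum_j d j * u j x * (u j y)^*) ->
  psd_op X.
Proof.
move=> d_ge0 XE v; under eq_bigr => x _ do under eq_bigr => y _ do rewrite XE.
rewrite quad_form_decomposition; apply: sumr_ge0 => j _.
have -> : \sum_y (u j y)^* * v y = (\sum_x (v x)^* * u j x)^*.
  by rewrite rmorph_sum /=; apply: eq_bigr => y _; rewrite rmorphM /= conjCK mulrC.
by rewrite -mulrA mulr_ge0 // mul_conjC_ge0.
Qed.

Lemma sum_enum_rank (K : finType) (f : 'I_#|K| -> C) :
  \sum_(x : K) f (enum_rank x) = \sum_(i : 'I_#|K|) f i.
Proof.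
rewrite (reindex (@enum_val K (mem predT))) /=; last exact/onW_bij/enum_val_bij.
by apply: eq_bigr => i _; rewrite enum_valK.
Qed.

(** The spectral theorem for the hermitian matrix of [X]: its eigenvalues [d j]
    are nonnegative since [d j] is the quadratic form at the [j]-th eigenvector. *)
Lemma psd_opP (K : finType) (X : K -> K -> C) : psd_op X ->
  exists (d : 'I_#|K| -> C) (u : 'I_#|K| -> K -> C),
    (forall j, 0 <= d j) /\ (forall x y, X x y = \sum_j d j * u j x * (u j y)^*).
Proof.
move=> psdX.
pose Xm : 'M[C]_#|K| := \matrix_(i, j) X (enum_val i) (enum_val j).
have Xm_hermitian : Xm ^t* = Xm.
  by apply/matrixP => i j; rewrite !mxE (psd_op_hermitian psdX) conjCK.
have Xm_normal : Xm \is normalmx by apply/normalmxP; rewrite Xm_hermitian.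
have := orthomx_spectralP Xm_normal.
set P := spectralmx Xm; set d := spectral_diag Xm.
have P_unitary : P \is unitarymx by exact: spectral_unitarymx.
rewrite invmx_unitary // => XmE.
have XE x y : X x y = \sum_k d 0 k * (P k (enum_rank x))^* * (P k (enum_rank y))^*^*.
  have -> : X x y = Xm (enum_rank x) (enum_rank y) by rewrite mxE !enum_rankK.
  rewrite XmE mul_mx_diag !mxE; apply: eq_bigr => k _; rewrite !mxE conjCK; ring.
exists (fun k => d 0 k), (fun k x => (P k (enum_rank x))^*); split=> // k.
have P_orth j l : \sum_(x : K) P j (enum_rank x) * (P l (enum_rank x))^* = (j == l)%:R.
  rewrite (sum_enum_rank (fun i => P j i * (P l i)^*)).
  move/unitarymxP: P_unitary => /matrixP /(_ j l); rewrite !mxE => <-.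
  by apply: eq_bigr => i _; rewrite !mxE.
have := psdX (fun x => (P k (enum_rank x))^*).
under eq_bigr => x _ do under eq_bigr => y _ do rewrite XE.
rewrite quad_form_decomposition.
under eq_bigr => j _.
  under eq_bigr => x _ do rewrite conjCK.
  under [X in _ * X]eq_bigr => y _ do rewrite conjCK.
  rewrite !P_orth; over.
rewrite (bigD1 k) //= eqxx big1 ?addr0 ?mulr1 //.
by move=> j /negbTE; rewrite eq_sym => ->; rewrite !mulr0.
Qed.

Definition tensor_op (K1 K2 : finType) (X : K1 -> K1 -> C) (Y : K2 -> K2 -> C) :
  (K1 * K2)%type -> (K1 * K2)%type -> C := fun x y => X x.1 y.1 * Y x.2 y.2.

Lemma psd_op_tensor (K1 K2 : finType) (X : K1 -> K1 -> C) (Y : K2 -> K2 -> C) :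
  psd_op X -> psd_op Y -> psd_op (tensor_op X Y).
Proof.
move=> /psd_opP [d [u [d_ge0 XE]]] /psd_opP [e [w [e_ge0 YE]]].
apply: (@psd_op_decomposition _ _ _ (fun p => d p.1 * e p.2)
                                    (fun p x => u p.1 x.1 * w p.2 x.2)).
  by move=> p; rewrite mulr_ge0.
move=> x y; rewrite /tensor_op XE YE mulr_suml.
under eq_bigr do rewrite mulr_sumr.
by rewrite pair_bigA /=; apply: eq_bigr => p _; rewrite rmorphM /=; ring.
Qed.

Lemma trace_mul_psd_ge0 (K : finType) (X Y : K -> K -> C) :
  psd_op X -> psd_op Y -> 0 <= \sum_x \sum_y X x y * Y y x.
Proof.
move=> psdX /psd_opP [e [w [e_ge0 YE]]].
under eq_bigr => x _ do under eq_bigr => y _ do rewrite YE mulr_sumr.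
under eq_bigr => x _ do rewrite exchange_big /=.
rewrite exchange_big /=; apply: sumr_ge0 => j _.
have := mulr_ge0 (e_ge0 j) (psdX (w j)); rewrite mulr_sumr.
congr (_ <= _); apply: eq_bigr => x _; rewrite mulr_sumr.
by apply: eq_bigr => y _; ring.
Qed.
End PositiveSemidefinite.

Section RealSymmetric.
Variable R : rcfType.
Local Notation "x %:C" := (real_complex R x) : ring_scope.

(** With [v = p + i q], the imaginary part of [v^* r v] cancels by symmetry of
    [r], leaving the real quadratic forms at [p] and at [q]. *)
Lemma psd_op_real_symmetric (K : finType) (r : K -> K -> R) :
  (forall a b, r a b = r b a) ->
  (forall x : K -> R, 0 <= \sum_a \sum_b r a b * (x a * x b)) ->
  psd_op (fun a b => (r a b)%:C).
Proof.
move=> r_sym r_psd v.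
pose p a := complex.Re (v a); pose q a := complex.Im (v a).
have real_C (x : R) : x%:C \is Num.real by apply/complex_realP; exists x.
have vE a : v a = (p a)%:C + 'i * (q a)%:C by rewrite {1}[v a]complexE complexiE.
have vE' a : (v a)^* = (p a)%:C - 'i * (q a)%:C by rewrite vE conjC_rect.
have sqrCi1 : 'i * 'i + 1 = 0 :> R[i] by rewrite -expr2 sqrCi addNr.
have termE a b : (v a)^* * (r a b)%:C * v b =
    (r a b * (p a * p b + q a * q b))%:C + 'i * (r a b * (p a * q b - q a * p b))%:C.
  rewrite vE' vE !(rmorphM, rmorphD, rmorphB, rmorphN) /=.
  transitivity ((r a b)%:C * ((p a)%:C * (p b)%:C + (q a)%:C * (q b)%:C) +
     'i * ((r a b)%:C * ((p a)%:C * (q b)%:C - (q a)%:C * (p b)%:C))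
     - ('i * 'i + 1) * ((q a)%:C * (r a b)%:C * (q b)%:C)); first by ring.
  by rewrite sqrCi1 mul0r subr0.
have im0 : \sum_a \sum_b r a b * (p a * q b - q a * p b) = 0.
  under eq_bigr => a _ do under eq_bigr => b _ do rewrite mulrBr.
  under eq_bigr => a _ do rewrite sumrB.
  rewrite sumrB [X in _ - X]exchange_big /=; apply/eqP; rewrite subr_eq0; apply/eqP.
  by apply: eq_bigr => a _; apply: eq_bigr => b _; rewrite r_sym; ring.
under eq_bigr => a _ do under eq_bigr => b _ do rewrite termE.
under eq_bigr => a _ do rewrite big_split /= -mulr_sumr -!rmorph_sum.
rewrite big_split /= -mulr_sumr -!rmorph_sum /= im0 mulr0 addr0 ler0c.
under eq_bigr => a _ do under eq_bigr => b _ do rewrite mulrDr.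
under eq_bigr => a _ do rewrite big_split /=.
by rewrite big_split /= addr_ge0.
Qed.
End RealSymmetric.

Section MeasurementProjectors.
Variable R : realType.
Local Notation "x %:C" := (real_complex R x) : ring_scope.

(** Unnormalized amplitudes <a|e_s> of the computational ([h = false]) and
    Hadamard ([h = true], scaled by sqrt 2) basis vectors. *)
Definition qubit_amp (h s a : bool) : R := if h then (-1) ^+ (s && a) else (a == s)%:R.

Definition meas_vec (m : nat) (Z : {set 'I_m}) (s a : bits m) : R :=
  \prod_(i < m) qubit_amp (i \notin Z) (s i) (a i).

Lemma qubit_projE h s a b :
  qubit_proj R h s a b = ((if h then 1 / 2 else 1) * qubit_amp h s a * qubit_amp h s b)%:C.
Proof.
rewrite /qubit_proj /qubit_amp.
case: h; rewrite !(rmorphM, fmorphV, rmorph_nat, rmorphN, rmorph1, rmorphXn) //=.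
by rewrite mul1r -natrM mulnb.
Qed.

Lemma card_notin_half (n : nat) (Z : {set 'I_(2 * n)}) :
  #|Z| = n -> #|[pred i : 'I_(2 * n) | i \notin Z]| = n.
Proof.
move=> cardZ; have := cardC (mem Z); rewrite card_ord cardZ.
have -> : #|[predC mem Z]| = #|[pred i | i \notin Z]| by apply: eq_card.
by lia.
Qed.

Lemma prod_if_in (m : nat) (Z : {set 'I_m}) (x y : R) :
  \prod_(i < m) (if i \in Z then x else y) =
  x ^+ #|Z| * y ^+ #|[pred i : 'I_m | i \notin Z]|.
Proof.
rewrite (bigID (mem Z)) /= (eq_bigr (fun _ => x)) => [|i ->] //.
rewrite [X in _ * X](eq_bigr (fun _ => y)) => [|i /negbTE ->] //.
by rewrite !prodr_const; congr (_ ^+ _ * _ ^+ _); apply: eq_card.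
Qed.

Lemma meas_projE (n : nat) (Z : {set 'I_(2 * n)}) s a b : #|Z| = n ->
  meas_proj R Z s a b = ((1 / 2) ^+ n * meas_vec Z s a * meas_vec Z s b)%:C.
Proof.
move=> cardZ; rewrite /meas_proj; under eq_bigr do rewrite qubit_projE.
rewrite -rmorph_prod !big_split /= /meas_vec; congr ((_ * _ * _)%:C).
have -> : \prod_(i < 2 * n) (if i \notin Z then 1 / 2 else 1) =
    \prod_(i < 2 * n) (if i \in Z then 1 else 1 / 2 : R).
  by apply: eq_bigr => i _; case: (i \in Z).
by rewrite prod_if_in expr1n mul1r card_notin_half.
Qed.

Definition qubit_overlap_bound (h h' : bool) : R := if h && h' then 2 else 1.

Lemma meas_vec_overlap_le m (Z Z' : {set 'I_m}) s s' :
  `|\sum_(a : bits m) meas_vec Z s a * meas_vec Z' s' a| <=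
  \prod_(i < m) qubit_overlap_bound (i \notin Z) (i \notin Z').
Proof.
have -> : \sum_(a : bits m) meas_vec Z s a * meas_vec Z' s' a =
    \prod_(i < m) \sum_(b : bool)
      qubit_amp (i \notin Z) (s i) b * qubit_amp (i \notin Z') (s' i) b.
  by rewrite bigA_distr_bigA /=; apply: eq_bigr => a _; rewrite -big_split.
rewrite normr_prod; apply: ler_prod => i _; rewrite normr_ge0 big_bool /=.
rewrite /qubit_amp /qubit_overlap_bound.
by case: (i \notin Z); case: (i \notin Z'); case: (s i); case: (s' i);
  rewrite /= ?expr0 ?expr1 ler_norml; apply/andP; split; lra.
Qed.

(** Summing [prod_i overlap] over all [Z'] rather than the n-subsets, after
    weighting each [i \in Z'] by [4/3] (which only rescales n-subsets by
    [(4/3)^n]), the sum factors coordinatewise. *)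
Lemma sum_overlap_bound_le (n : nat) (Z : {set 'I_(2 * n)}) : #|Z| = n ->
  (1 / 2) ^+ n * \sum_(Z' : {set 'I_(2 * n)} | #|Z'| == n)
     \prod_(i < 2 * n) qubit_overlap_bound (i \notin Z) (i \notin Z') <= (35 / 12) ^+ n.
Proof.
move=> cardZ; set cc := qubit_overlap_bound.
pose phi (Z' : {set 'I_(2 * n)}) := \prod_(i < 2 * n)
   (if i \in Z' then 4 / 3 * cc (i \notin Z) false else cc (i \notin Z) true).
have phi_ge0 Z' : 0 <= phi Z'.
  apply: prodr_ge0 => i _; rewrite /cc /qubit_overlap_bound.
  by case: (i \in Z'); case: (i \notin Z); rewrite /=; lra.
have phiE (Z' : {set 'I_(2 * n)}) : #|Z'| = n ->
    \prod_(i < 2 * n) cc (i \notin Z) (i \notin Z') = (3 / 4) ^+ n * phi Z'.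
  move=> cardZ'; have -> : phi Z' = \prod_(i < 2 * n) (if i \in Z' then 4 / 3 else 1) *
      \prod_(i < 2 * n) cc (i \notin Z) (i \notin Z').
    by rewrite -big_split /=; apply: eq_bigr => i _; case: (i \in Z'); rewrite /= ?mul1r.
  rewrite prod_if_in cardZ' expr1n mulr1 mulrA -exprMn.
  by rewrite (_ : 3 / 4 * (4 / 3) = 1 :> R) ?expr1n ?mul1r //; lra.
rewrite (eq_bigr (fun Z' => (3 / 4) ^+ n * phi Z')); last by move=> Z' /eqP /phiE.
rewrite -mulr_sumr.
apply: (@le_trans _ _ ((1 / 2) ^+ n * ((3 / 4) ^+ n * \sum_Z' phi Z'))).
  rewrite !ler_wpM2l ?exprn_ge0 //; try lra.
  by rewrite [X in _ <= X](bigID (fun Z' : {set _} => #|Z'| == n)) /= lerDl sumr_ge0.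
rewrite /phi -bigA_distr /=.
rewrite (eq_bigr (fun i => if i \in Z then 7 / 3 else 10 / 3)); last first.
  by move=> i _; rewrite /cc /qubit_overlap_bound; case: (i \in Z); rewrite /=; lra.
rewrite prod_if_in cardZ card_notin_half // mulrA -!exprMn.
by rewrite le_eqVlt; apply/orP; left; apply/eqP; congr (_ ^+ _); lra.
Qed.

(** [P_Z(s) = 2^-n F F^T] with [F = meas_vec Z s], so this is the Schur test for
    the Gram matrix of the vectors [meas_vec Z (s Z)]. *)
Lemma sum_meas_proj_le (n : nat) (s : {set 'I_(2 * n)} -> bits (2 * n)) :
  psd_op (fun a b : bits (2 * n) => ((35 / 12 : R) ^+ n)%:C * (a == b)%:R -
     \sum_(Z : {set 'I_(2 * n)} | #|Z| == n) meas_proj R Z (s Z) a b).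
Proof.
set mu : R := _ ^+ n; set w : R := (1 / 2) ^+ n.
pose F (Z : {set 'I_(2 * n)}) := meas_vec Z (s Z).
pose r (a b : bits (2 * n)) :=
  mu * (a == b)%:R - \sum_(Z : {set 'I_(2 * n)} | #|Z| == n) w * F Z a * F Z b.
apply: (@eq_psd_op _ _ (fun a b => (r a b)%:C)).
  move=> a b; rewrite rmorphB rmorphM rmorph_nat rmorph_sum /=; congr (_ - _).
  by apply: eq_bigr => Z /eqP cardZ; rewrite meas_projE.
apply: psd_op_real_symmetric => [a b|x].
  by rewrite /r eq_sym; congr (_ - _); apply: eq_bigr => Z _; ring.
have -> : \sum_a \sum_b r a b * (x a * x b) = mu * \sum_a x a ^+ 2 -
    \sum_(Z : {set 'I_(2 * n)} | #|Z| == n) w * (\sum_a F Z a * x a) ^+ 2.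
  under eq_bigr => a _ do under eq_bigr => b _ do rewrite mulrBl.
  under eq_bigr => a _ do rewrite sumrB.
  rewrite sumrB; congr (_ - _).
    rewrite mulr_sumr; apply: eq_bigr => a _.
    under eq_bigr => b _ do rewrite -mulrA mulrCA eq_sym.
    by rewrite sum_delta_mul expr2.
  under eq_bigr => a _ do under eq_bigr => b _ do rewrite mulr_suml.
  under eq_bigr => a _ do rewrite exchange_big /=.
  rewrite exchange_big /=; apply: eq_bigr => Z _.
  rewrite expr2 mulr_suml mulr_sumr; apply: eq_bigr => a _.
  by rewrite !mulr_sumr; apply: eq_bigr => b _; ring.
rewrite subr_ge0; apply: schur_test; rewrite ?exprn_gt0 //; try lra.
move=> Z /eqP cardZ; apply: le_trans (sum_overlap_bound_le cardZ).
apply: ler_wpM2l; first by rewrite exprn_ge0 //; lra.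
by apply: ler_sum => Z' _; exact: meas_vec_overlap_le.
Qed.
End MeasurementProjectors.

Section SuccessProbability.
Variable R : realType.
Local Notation "x %:C" := (real_complex R x) : ring_scope.

Lemma trace_mul_tens3_subr (K1 K2 K3 : finType) (rho : op R (K1 * K2 * K3)%type)
    (c : R[i]) (X P : op R K1) (Y : op R K2) (W : op R K3) :
  trace_mul rho (tens3 (fun a b => c * X a b - P a b) Y W) =
  c * trace_mul rho (tens3 X Y W) - trace_mul rho (tens3 P Y W).
Proof.
rewrite /trace_mul /tens3 mulr_sumr -sumrB; apply: eq_bigr => x _.
by rewrite mulr_sumr -sumrB; apply: eq_bigr => y _; ring.
Qed.

Lemma trace_mul_tens3_sum (K1 K2 K3 I : finType) (rho : op R (K1 * K2 * K3)%type)
    (Q : pred I) (X : I -> op R K1) (Y : op R K2) (W : op R K3) :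
  trace_mul rho (tens3 (fun a b => \sum_(i | Q i) X i a b) Y W) =
  \sum_(i | Q i) trace_mul rho (tens3 (X i) Y W).
Proof.
rewrite /trace_mul /tens3.
under eq_bigr => x _ do under eq_bigr => y _ do rewrite !mulr_suml mulr_sumr.
by under eq_bigr => x _ do rewrite exchange_big /=; rewrite exchange_big.
Qed.

Lemma sum_trace_mul_povm (K1 K2 K3 O2 O3 : finType) (rho : op R (K1 * K2 * K3)%type)
    (M : O2 -> op R K2) (N : O3 -> op R K3) :
  povm M -> povm N ->
  \sum_t \sum_t' trace_mul rho (tens3 (fun a b => (a == b)%:R) (M t) (N t')) =
  \sum_x rho x x.
Proof.
move=> [_ M_sum1] [_ N_sum1]; rewrite /trace_mul /tens3.
have id_sum (x y : (K1 * K2 * K3)%type) :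
    \sum_t \sum_t' (y.1.1 == x.1.1)%:R * M t y.1.2 x.1.2 * N t' y.2 x.2 = (y == x)%:R.
  under eq_bigr => t _ do rewrite -mulr_sumr.
  rewrite -mulr_suml -mulr_sumr M_sum1 N_sum1.
  by case: x => [[? ?] ?]; case: y => [[? ?] ?]; rewrite /= !xpair_eqE -!natrM !mulnb.
transitivity (\sum_x \sum_y rho x y * (y == x)%:R); last first.
  by apply: eq_bigr => x _; under eq_bigr do rewrite mulrC; rewrite sum_delta_mul.
under [RHS]eq_bigr => x _ do under eq_bigr => y _ do rewrite -id_sum !mulr_sumr.
under [RHS]eq_bigr => x _ do under eq_bigr => y _ do under eq_bigr do rewrite mulr_sumr.
under [RHS]eq_bigr => x _ do under eq_bigr => y _ do rewrite pair_bigA /=.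
under [RHS]eq_bigr => x _ do rewrite exchange_big /=.
rewrite [RHS]exchange_big pair_bigA /=.
by do 3 (apply: eq_bigr => ? _); rewrite mulrA.
Qed.

Definition splice m (Z : {set 'I_m}) (t t' : bits m) : bits m :=
  [ffun i => if i \in Z then t i else t' i].

Lemma match_spliceE m (Z : {set 'I_m}) (t t' s : bits m) :
  [forall i, (i \in Z) ==> (t i == s i)] && [forall i, (i \notin Z) ==> (t' i == s i)]
  = (s == splice Z t t').
Proof.
apply/idP/eqP => [/andP [/forallP tZ /forallP t'X]|->].
  apply/ffunP => i; rewrite ffunE.
  by case: (boolP (i \in Z)) => iZ; [move: (tZ i) | move: (t'X i)];
    rewrite iZ => /eqP.
by apply/andP; split; apply/forallP => i; apply/implyP => iZ;
  rewrite ffunE ?iZ ?(negbTE iZ).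
Qed.

Lemma Re_sum (I : finType) (Q : pred I) (f : I -> R[i]) :
  complex.Re (\sum_(i | Q i) f i) = \sum_(i | Q i) complex.Re (f i).
Proof. by apply: (big_morph (@complex.Re R)) => // -[a b] [c d]. Qed.
End SuccessProbability.

Section Alpha.
Variables (R : realType) (n : nat) (B B' : finType).
Variables (sigma : op R (bits (2 * n) * B * B')%type).
Variables (M : bits (2 * n) -> op R B) (N : bits (2 * n) -> op R B').
Local Notation "x %:C" := (real_complex R x) : ring_scope.

Definition splice_success : R[i] :=
  \sum_t \sum_t' \sum_(Z : {set 'I_(2 * n)} | #|Z| == n)
    trace_mul sigma (tens3 (meas_proj R Z (splice Z t t')) (M t) (N t')).

Lemma alpha_splice : alpha sigma M N = 'C(2 * n, n)%:R^-1 * complex.Re splice_success.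
Proof.
rewrite /alpha /splice_success; congr (_ * _).
rewrite Re_sum; under [RHS]eq_bigr => t _ do rewrite Re_sum.
under [RHS]eq_bigr => t _ do under eq_bigr => t' _ do rewrite Re_sum.
under [RHS]eq_bigr => t _ do rewrite exchange_big /=.
rewrite [RHS]exchange_big /=; apply: eq_bigr => Z _.
rewrite exchange_big /=; apply: eq_bigr => t _.
rewrite exchange_big /=; apply: eq_bigr => t' _.
under eq_bigr => s _ do rewrite match_spliceE.
by rewrite -big_mkcond big_pred1_eq.
Qed.

(** Tr (sigma ((mu I - sum_Z P_Z) (x) M_t (x) N_t')) >= 0 for each [t, t'], and
    summing over [t, t'] turns [mu I (x) M_t (x) N_t'] into [mu] by completeness. *)
Lemma splice_success_le : density sigma -> povm M -> povm N ->
  complex.Re splice_success <= (35 / 12) ^+ n.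
Proof.
move=> [sigma_psd tr_sigma] povmM povmN.
set mu : R := _ ^+ n.
suff : 0 <= mu%:C - splice_success by rewrite subr_ge0 lecE => /andP[].
rewrite -[mu%:C]mulr1 -tr_sigma -(sum_trace_mul_povm sigma povmM povmN).
rewrite mulr_sumr /splice_success -sumrB; apply: sumr_ge0 => t _.
rewrite mulr_sumr -sumrB; apply: sumr_ge0 => t' _.
rewrite -trace_mul_tens3_sum -trace_mul_tens3_subr.
apply: trace_mul_psd_ge0 sigma_psd _.
exact: (psd_op_tensor (psd_op_tensor
  (sum_meas_proj_le (fun Z => splice Z t t')) (povmM.1 t)) (povmN.1 t')).
Qed.
End Alpha.

Theorem lemma2 (R : realType) (n : nat) (B B' : finType)
  (sigma : op R (bits (2 * n) * B * B')%type)
  (M : bits (2 * n) -> op R B) (N : bits (2 * n) -> op R B') :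
  (1 <= n)%N ->
  density sigma -> povm M -> povm N ->
  forall delta : R, 0 < delta < 1 / 2 ->
    alpha sigma M N <=
      powR 2 (1 - n%:R * (1 - h2 delta)) + 2 * expR (- (1 / 2) * n%:R * delta ^+ 2).
Proof.
move=> n_gt0 sigma_density povmM povmN delta delta_bounds.
apply: le_trans (geometric_div_bin_double_le n_gt0 delta_bounds).
rewrite alpha_splice ler_wpM2l ?invr_ge0 ?ler0n //.
exact: splice_success_le.
Qed.
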